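(* Let $G$ be a bipartite graph with color classes $E$ and $V$, and let the splitting $V\cup E=S\cup T$ induce a non-empty directed cut $C$ of $G$. Then the root polytope $Q_G$ has a supporting hyperplane which contains none of the vertices of $Q_G$ corresponding to edges in $C$ but contains all other vertices of $Q_G$.
   Context: Bipartite graphs have no multiple edges. $Q_G\subset\mathbf R^E\oplus\mathbf R^V$ is the convex hull of the points $\mathbf i_{\{e\}}+\mathbf i_{\{v\}}$ over edges $ev$ of $G$ ($\mathbf i$ = indicator vector); the vertex $\mathbf i_{\{e\}}+\mathbf i_{\{v\}}$ corresponds to the edge $ev$. The cut induced by a splitting $V\cup E=S\cup T$ into disjoint sets is the set of edges between $S$ and $T$; it is directed if $G$ has no edges between $E\cap S$ and $V\cap T$. *)

From HB Require Import structures.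
From mathcomp Require Import all_boot all_order all_algebra.
Set Implicit Arguments. Unset Strict Implicit. Unset Printing Implicit Defensive.
Import Order.TTheory GRing.Theory Num.Theory.
Local Open Scope ring_scope.

(* A bipartite graph with colour classes E and V (finite types) and no
   multiple edges is a set of pairs G : {set E * V}; (e,v) \in G means that
   e and v are adjacent.  The ambient space R^E (+) R^V is modelled as
   {ffun (E + V) -> R}. *)

Section Root.
Variables (R : realFieldType) (E V : finType).

Definition rpoint (ev : E * V) : {ffun (E + V)%type -> R} :=
  [ffun i => ((i == inl ev.1) || (i == inr ev.2))%:R].

Definition root_polytope (G : {set E * V}) : {ffun (E + V)%type -> R} -> Prop :=
  fun x => exists lam : E * V -> R,
    [/\ forall ev, ev \in G -> 0 <= lam ev,
        \sum_(ev in G) lam ev = 1 &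
        forall i, x i = \sum_(ev in G) lam ev * rpoint ev i].

Definition dotf (a x : {ffun (E + V)%type -> R}) : R := \sum_i a i * x i.

(* S is one side of the splitting V u E = S u T, T = complement of S *)
Definition in_cut (S : {set (E + V)%type}) (ev : E * V) : bool :=
  (inl ev.1 \in S) != (inr ev.2 \in S).

Definition cut (G : {set E * V}) (S : {set (E + V)%type}) : {set E * V} :=
  [set ev in G | in_cut S ev].

Definition directed_cut (G : {set E * V}) (S : {set (E + V)%type}) : Prop :=
  forall ev, ev \in G -> ~ ((inl ev.1 \in S) && (inr ev.2 \notin S)).

Definition supporting_hyperplane (P : {ffun (E + V)%type -> R} -> Prop)
  (a : {ffun (E + V)%type -> R}) (c : R) : Prop :=
  (exists i, a i != 0) /\ forall x, P x -> dotf a x <= c.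

End Root.

From mathcomp Require Import all_boot all_order all_algebra.
Import Order.TTheory GRing.Theory Num.Theory.
Set Implicit Arguments. Unset Strict Implicit.
Local Open Scope ring_scope.

(* Weight the coordinates by +1 on E \cap S, -1 on V \cap S and 0 on T.  The
   resulting functional takes the value [e \in S] - [v \in S] on the vertex
   i_e + i_v; directedness rules out the value +1, so it vanishes on the
   edges outside the cut and equals -1 on the cut edges. *)

Section RootPolytope.
Variables (R : realFieldType) (E V : finType).
Implicit Types (G : {set E * V}) (S : {set (E + V)%type}).
Implicit Types (a x : {ffun (E + V)%type -> R}).

Lemma dotf_rpoint a ev : dotf a (rpoint R ev) = a (inl ev.1) + a (inr ev.2).
Proof.
rewrite /dotf (bigD1 (inl ev.1)) //= (bigD1 (inr ev.2)) //= big1.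
  by rewrite !ffunE !eqxx ?orbT !mulr1 addr0.
by move=> i /andP[ne1 ne2]; rewrite ffunE (negbTE ne1) (negbTE ne2) mulr0.
Qed.

Lemma dotf_neq0_support a x : dotf a x != 0 -> exists i, a i != 0.
Proof.
move=> dot_nz; have [i ai_nz | a0] := pickP (fun i => a i != 0).
  by exists i.
move: dot_nz; rewrite /dotf big1 ?eqxx // => i _.
by rewrite (eqP (negbFE (a0 i))) mul0r.
Qed.

Lemma root_polytope_le G a c :
  (forall ev, ev \in G -> dotf a (rpoint R ev) <= c) ->
  forall x, root_polytope G x -> dotf a x <= c.
Proof.
move=> le_c x [lam [lam_ge0 lam_sum1 x_comb]].
have -> : dotf a x = \sum_(ev in G) lam ev * dotf a (rpoint R ev).
  rewrite /dotf; under eq_bigr => i _ do rewrite x_comb big_distrr.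
  rewrite exchange_big /=; apply: eq_bigr => ev _; rewrite big_distrr.
  by apply: eq_bigr => i _; rewrite mulrCA.
rewrite -[c]mul1r -lam_sum1 mulr_suml.
by apply: ler_sum => ev Gev; rewrite ler_wpM2l ?lam_ge0 ?le_c.
Qed.

Definition cut_functional S : {ffun (E + V)%type -> R} :=
  [ffun i => match i with inl _ => (i \in S)%:R | inr _ => - (i \in S)%:R end].

Lemma cut_functional_edge G S ev :
  directed_cut G S -> ev \in G ->
  dotf (cut_functional S) (rpoint R ev) = - (ev \in cut G S)%:R.
Proof.
move=> dirS Gev; have := dirS ev Gev.
rewrite dotf_rpoint !ffunE inE Gev /in_cut.
case: (inl ev.1 \in S); case: (inr ev.2 \in S) => //= _;
  by rewrite ?oppr0 ?addr0 ?add0r ?subrr.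
Qed.

End RootPolytope.

Theorem lemma3p5 (R : realFieldType) (E V : finType) (G : {set E * V})
  (S : {set (E + V)%type}) :
  directed_cut G S -> cut G S != set0 ->
  exists (a : {ffun (E + V)%type -> R}) (c : R),
    [/\ supporting_hyperplane (root_polytope G) a c,
        forall ev, ev \in cut G S -> dotf a (rpoint R ev) != c &
        forall ev, ev \in G -> ev \notin cut G S -> dotf a (rpoint R ev) = c].
Proof.
move=> dirS /set0Pn[ev0 cut_ev0].
have cutG ev : ev \in cut G S -> ev \in G by rewrite inE => /andP[].
have on_cut ev : ev \in cut G S -> dotf (cut_functional R S) (rpoint R ev) != 0.
  move=> cut_ev; rewrite (cut_functional_edge R dirS (cutG _ cut_ev)) cut_ev.
  by rewrite oppr_eq0 oner_eq0.
exists (cut_functional R S), 0; split.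
- split; first exact: dotf_neq0_support (on_cut _ cut_ev0).
  apply: root_polytope_le => ev Gev.
  by rewrite (cut_functional_edge R dirS Gev) oppr_le0 ler0n.
- exact: on_cut.
- move=> ev Gev /negbTE off_cut.
  by rewrite (cut_functional_edge R dirS Gev) off_cut oppr0.
Qed.
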